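(* Let $\mathcal{I}\subseteq\mathcal{M}_m$ be decreasing and $f,g\in\mathcal{I}$ with $\deg f=\deg g=s\ge2$, $\operatorname{ind}(f)=\{i_1<\dots<i_s\}$ and $\operatorname{ind}(g)=\{j_1<\dots<j_s\}$, such that $i_s>i_{s-1}>j_s$ or $j_s>j_{s-1}>i_s$. Then $$\bigl|\mathrm{LTA}(m,2)\cdot f+\mathrm{LTA}(m,2)\cdot g\bigr|=\bigl|\mathrm{LTA}(m,2)\cdot f\bigr|\cdot\bigl|\mathrm{LTA}(m,2)\cdot g\bigr|.$$
   Context: $\mathcal{M}_m$: square-free monomials in $x_0,\dots,x_{m-1}$ in $\mathbf{R}_m=\mathbb{F}_2[x_0,\dots,x_{m-1}]/(x_i^2-x_i)$; $\operatorname{ind}(u)$ the variable indices, $\deg u=|\operatorname{ind}u|$. For equal-degree monomials with increasing indices, $u\preceq_{sh}v$ iff componentwise $\le$; $u\preceq v$ iff $u\preceq_{sh}v^*\mid v$ for some $v^*$; $\mathcal{I}$ decreasing if $f\in\mathcal{I}$, $g\preceq f\Rightarrow g\in\mathcal{I}$. $\mathrm{LTA}(m,2)$: pairs $(\mathbf{B},\varepsilon)$ with $\mathbf{B}=(b_{i,j})$ binary lower unitriangular $m\times m$ and $\varepsilon\in\mathbb{F}_2^m$, acting on monomial $u$ by $x_i\mapsto x_i+\sum_{j<i}b_{i,j}x_j+\varepsilon_i$ for $i\in\operatorname{ind}u$; $\mathrm{LTA}(m,2)\cdot f$ is the orbit (set of polynomials). $A+B=\{a+b:a\in A,b\in B\}$.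 *)

From HB Require Import structures.
From mathcomp Require Import all_boot all_order all_algebra.
Set Implicit Arguments. Unset Strict Implicit. Unset Printing Implicit Defensive.

(* R_m = F_2[x_0..x_{m-1}]/(x_i^2 - x_i) has the F_2-basis of square-free
   monomials.  A square-free monomial u is represented by its index set
   ind(u) : {set 'I_m}; a polynomial of R_m by its (finite) set of monomials
   with coefficient 1. *)
Definition monom (m : nat) := {set 'I_m}.
Definition rpoly (m : nat) := {set {set 'I_m}}.

Definition padd m (P Q : rpoly m) : rpoly m := (P :\: Q) :|: (Q :\: P).

(* product in R_m : monomials multiply by union of index sets (x_i^2 = x_i),
   coefficients are summed mod 2 *)
Definition pmul m (P Q : rpoly m) : rpoly m :=
  [set w : {set 'I_m} |
     odd #|[set uv in setX P Q | uv.1 :|: uv.2 == w]| ].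

Definition pone m : rpoly m := [set set0].

Definition ind m (u : monom m) : seq nat := sort leq [seq val i | i <- enum u].

Definition sh_le m (u v : monom m) : bool :=
  (#|u| == #|v|) && all2 leq (ind u) (ind v).

Definition mon_le m (u v : monom m) : bool :=
  [exists vs : {set 'I_m}, (vs \subset v) && sh_le u vs].

Definition decreasing m (I : {set monom m}) : Prop :=
  forall f g : monom m, f \in I -> mon_le g f -> g \in I.

Definition lower_unitri m (B : 'M['F_2]_m) : bool :=
  [forall i : 'I_m, B i i == 1%R] && [forall i : 'I_m, forall j : 'I_m, (i < j)%N ==> (B i j == 0%R)].

(* image of x_i : x_i + sum_{j<i} b_{ij} x_j + eps_i *)
Definition aff_form m (B : 'M['F_2]_m) (e : 'rV['F_2]_m) (i : 'I_m) : rpoly m :=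
  [set [set i]] :|: [set [set j] | j : 'I_m & (j < i)%N && (B i j == 1%R)]
    :|: (if e ord0 i == 1%R then [set set0] else set0).

Definition lta_act m (B : 'M['F_2]_m) (e : 'rV['F_2]_m) (u : monom m) : rpoly m :=
  foldr (@pmul m) (pone m) [seq aff_form B e i | i <- enum u].

Definition lta_orbit m (u : monom m) : {set rpoly m} :=
  [set lta_act p.1 p.2 u |
     p in [set p : 'M['F_2]_m * 'rV['F_2]_m | lower_unitri p.1]].

Definition sumset m (A B : {set rpoly m}) : {set rpoly m} :=
  [set padd a b | a in A, b in B].

From mathcomp Require Import all_boot all_order all_algebra.
From mathcomp Require Import zify.
Set Implicit Arguments. Unset Strict Implicit.

(** Evaluating at the points of F_2^m identifies R_m with the Boolean functions on F_2^m, so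
   identities in R_m can be checked pointwise.  An element of the orbit of f is a product
   l * A, where l = x_{i_s} + (terms in lower variables) and A is the product of the images of
   the other variables of f.  If a + b = a' + b' with a, a' in the orbit of f and b, b' in the
   orbit of g, then a + a' = b + b' only involves variables below j_s + 1 <= i_{s-1}, so it is
   invariant under toggling the coordinates x_{i_s} and x_{i_{s-1}}.  Toggling x_{i_s} negates
   l and l' but fixes A and A', which forces A = A'; then a + a' vanishes outside A, and toggling
   x_{i_{s-1}} maps A into its complement, so a = a' and hence b = b'. *)

Lemma odd_sum_card (I : finType) (A : pred I) (F : I -> nat) :
  odd (\sum_(i | A i) F i) = odd #|[set i | A i & odd (F i)]|.
Proof.
rewrite -sum1_card big_mkcond [in X in _ = X]big_mkcond /=.
apply: (big_ind2 (fun a b => odd a = odd b)) => // [a b c d Eac Ebd | i _].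
  by rewrite !oddD Eac Ebd.
by rewrite !inE; case: (A i); case: (boolP (odd (F i))).
Qed.

Lemma odd_card_symdiff (T : finType) (A B : {set T}) :
  odd #|(A :\: B) :|: (B :\: A)| = odd #|A| (+) odd #|B|.
Proof.
rewrite cardsU.
have -> : (A :\: B) :&: (B :\: A) = set0.
  by apply/setP => w; rewrite !inE; case: (w \in A); case: (w \in B).
rewrite cards0 subn0 oddD !cardsD.
rewrite !oddB ?subset_leq_card ?subsetIl ?subsetIr // setIC.
by case: (odd #|A|); case: (odd #|B|); case: (odd _).
Qed.

Section Evaluation.
Variable m : nat.
Implicit Types (P Q : rpoly m) (x : {set 'I_m}).

(* A point of F_2^m is given by its support x; the monomial with index set w takes the
   value 1 at x iff w is contained in x. *)
Definition peval P x : bool := odd #|[set w in P | w \subset x]|.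

Lemma peval_padd P Q x : peval (padd P Q) x = peval P x (+) peval Q x.
Proof.
rewrite /peval -odd_card_symdiff; congr odd; apply: eq_card => w; rewrite !inE.
by case: (w \in P); case: (w \in Q); case: (w \subset x).
Qed.

Lemma peval_pmul P Q x : peval (pmul P Q) x = peval P x && peval Q x.
Proof.
pose S := [set uv in setX P Q | uv.1 :|: uv.2 \subset x].
have cardS :
    #|S| = \sum_(w : {set 'I_m} | w \subset x) #|[set uv in S | uv.1 :|: uv.2 == w]|.
  rewrite -sum1_card (partition_big (fun uv => uv.1 :|: uv.2) (fun w => w \subset x));
    last by move=> uv; rewrite inE => /andP[].
  by apply: eq_bigr => w _; rewrite -sum1_card; apply: eq_bigl => uv; rewrite inE.
have -> : peval (pmul P Q) x = odd #|S|.
  rewrite cardS odd_sum_card /peval; congr odd; apply: eq_card => w; rewrite !inE andbC.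
  case: (boolP (w \subset x)) => //= wx; congr odd; apply: eq_card => -[u v]; rewrite !inE /=.
  by case: eqP => [-> | _]; rewrite ?wx ?andbT ?andbF.
have -> : S = setX [set u in P | u \subset x] [set v in Q | v \subset x].
  apply/setP => -[u v]; rewrite !inE /= subUset.
  by case: (u \in P); case: (v \in Q); case: (u \subset x).
by rewrite cardsX oddM.
Qed.

Lemma peval_pone x : peval (pone m) x.
Proof.
rewrite /peval (_ : [set w in pone m | w \subset x] = [set set0]) ?cards1 //.
by apply/setP => w; rewrite !inE; case: eqP => // ->; rewrite sub0set.
Qed.

Lemma peval_var (i : 'I_m) x : peval [set [set i]] x = (i \in x).
Proof.
rewrite /peval (_ : [set w in [set [set i]] | w \subset x] =
                   if i \in x then [set [set i]] else set0).
  by case: ifP; rewrite ?cards1 ?cards0.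
by apply/setP => w; case: ifP => ix; rewrite !inE; case: eqP => // ->; rewrite sub1set ix.
Qed.

(* A nonzero polynomial does not vanish at the index set of any of its monomials of minimal
   degree. *)
Lemma peval_inj P Q : (forall x, peval P x = peval Q x) -> P = Q.
Proof.
move=> PQ; have PQ0 x : peval (padd P Q) x = false by rewrite peval_padd PQ addbb.
case: (set_0Vmem (padd P Q)) => [PQ_empty | [w0 w0PQ]].
  apply/setP => w; have : w \in padd P Q = false by rewrite PQ_empty inE.
  by rewrite /padd !inE; case: (w \in P); case: (w \in Q).
case: (arg_minnP (fun w : {set 'I_m} => #|w|) w0PQ) => w wPQ wmin.
have := PQ0 w; rewrite /peval (_ : [set v in padd P Q | v \subset w] = [set w]) ?cards1 //.
apply/setP => v; rewrite in_set in_set1.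
apply/andP/eqP => [[vPQ vw] | ->]; last by rewrite subxx.
by apply/eqP; rewrite eqEcard vw wmin.
Qed.

Definition vars_below k P := forall w, w \in P -> forall t : 'I_m, t \in w -> t < k.

Lemma vars_belowW k k' P : k <= k' -> vars_below k P -> vars_below k' P.
Proof. by move=> kk' Pk w wP t tw; apply: leq_trans (Pk w wP t tw) kk'. Qed.

Lemma vars_below_pone k : vars_below k (pone m).
Proof. by move=> w; rewrite inE => /eqP -> t; rewrite inE. Qed.

Lemma vars_below_padd k P Q : vars_below k P -> vars_below k Q -> vars_below k (padd P Q).
Proof. by move=> Pk Qk w; rewrite !inE => /orP[] /andP[_]; [apply: Pk | apply: Qk]. Qed.

Lemma vars_below_pmul k P Q : vars_below k P -> vars_below k Q -> vars_below k (pmul P Q).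
Proof.
move=> Pk Qk w; rewrite inE => odd_w.
have : #|[set uv in setX P Q | uv.1 :|: uv.2 == w]| > 0 by case: #|_| odd_w.
rewrite card_gt0 => /set0Pn [[u v]]; rewrite !inE /= => /andP [/andP [uP vQ] /eqP <-] t.
by rewrite inE => /orP[]; [apply: (Pk u) | apply: (Qk v)].
Qed.

Lemma peval_vars_below k P x x' : vars_below k P ->
  (forall t : 'I_m, t < k -> (t \in x) = (t \in x')) -> peval P x = peval P x'.
Proof.
move=> Pk xx'; rewrite /peval; congr odd; apply: eq_card => w; rewrite !inE.
case wP: (w \in P) => //=; apply/subsetP/subsetP => wx t tw.
  by rewrite -xx' ?wx ?(Pk w wP t tw).
by rewrite xx' ?wx ?(Pk w wP t tw).
Qed.

Definition toggle x (t : 'I_m) := if t \in x then x :\ t else t |: x.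

Lemma in_toggle x (t u : 'I_m) : (u \in toggle x t) = if u == t then t \notin x else u \in x.
Proof. by rewrite /toggle; case: ifP => tx; rewrite !inE; case: eqP => // ->; rewrite tx. Qed.

Lemma peval_toggle k P x (t : 'I_m) :
  vars_below k P -> k <= t -> peval P (toggle x t) = peval P x.
Proof.
move=> Pk kt; apply: peval_vars_below Pk _ => u uk; rewrite in_toggle.
by case: eqP => // ut; rewrite ut ltnNge kt in uk.
Qed.

Section AffineForms.
Variables (B : 'M['F_2]_m) (e : 'rV['F_2]_m).

Definition aff_tail (i : 'I_m) : rpoly m :=
  [set [set j] | j : 'I_m & (j < i)%N && (B i j == 1%R)]
    :|: (if e ord0 i == 1%R then [set set0] else set0).

Lemma vars_below_aff_tail (i : 'I_m) : vars_below i (aff_tail i).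
Proof.
move=> w; rewrite !inE => /orP [/imsetP [j] | ].
  by rewrite inE => /andP [ji _] -> t; rewrite inE => /eqP ->.
by case: ifP; rewrite ?inE // => _ /eqP -> t; rewrite inE.
Qed.

Lemma aff_formE (i : 'I_m) : aff_form B e i = padd [set [set i]] (aff_tail i).
Proof.
have iNtail : [set i] \notin aff_tail i.
  by apply/negP => /vars_below_aff_tail /(_ i); rewrite inE eqxx ltnn => /(_ isT).
apply/setP => w; rewrite /aff_form /padd -setUA -/(aff_tail i) !inE.
by case: eqP => [-> | _]; [move: iNtail; rewrite /aff_tail inE => /negbTE -> | rewrite andbF].
Qed.

Lemma vars_below_aff (i : 'I_m) : vars_below i.+1 (aff_form B e i).
Proof.
rewrite aff_formE; apply: vars_below_padd.
  by move=> w; rewrite inE => /eqP -> t; rewrite inE => /eqP ->.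
exact: vars_belowW (leqnSn i) (@vars_below_aff_tail i).
Qed.

Lemma peval_aff_toggle (i : 'I_m) x :
  peval (aff_form B e i) (toggle x i) = ~~ peval (aff_form B e i) x.
Proof.
rewrite !aff_formE !peval_padd !peval_var in_toggle eqxx.
rewrite (peval_toggle x (@vars_below_aff_tail i) (leqnn i)).
by case: (i \in x); case: (peval _ _).
Qed.

Lemma peval_act (u : monom m) x :
  peval (lta_act B e u) x = [forall i in u, peval (aff_form B e i) x].
Proof.
rewrite /lta_act; apply/idP/forall_inP => [+ i | all_u].
  rewrite -mem_enum; elim: (enum u) => [|a r IH] //=.
  by rewrite peval_pmul inE => /andP[ax rx] /orP[/eqP -> | /IH]; last exact.
have : {in enum u, forall i, peval (aff_form B e i) x}.
  by move=> i; rewrite mem_enum; exact: all_u.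
elim: (enum u) => [_ | a r IH all_ar] /=; first exact: peval_pone.
by rewrite peval_pmul all_ar ?mem_head ?IH // => i ir; rewrite all_ar // inE ir orbT.
Qed.

Lemma vars_below_act (u : monom m) k :
  (forall i, i \in u -> i < k) -> vars_below k (lta_act B e u).
Proof.
rewrite /lta_act => u_k.
have : {in enum u, forall i : 'I_m, i < k} by move=> i; rewrite mem_enum; exact: u_k.
elim: (enum u) => [_ | a r IH ar_k] /=; first exact: vars_below_pone.
apply: vars_below_pmul; first exact: vars_belowW (ar_k a (mem_head a r)) (@vars_below_aff a).
by apply: IH => i ir; rewrite ar_k // inE ir orbT.
Qed.

End AffineForms.
End Evaluation.

Section Indices.
Variable m : nat.
Implicit Types (u : monom m).

Lemma size_ind u : size (ind u) = #|u|.
Proof. by rewrite /ind size_sort size_map cardE. Qed.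

Lemma mem_ind u (t : 'I_m) : (val t \in ind u) = (t \in u).
Proof. by rewrite /ind mem_sort (mem_map val_inj) mem_enum. Qed.

Lemma nth_ind_mem u k : k < #|u| -> exists2 t : 'I_m, t \in u & val t = nth 0 (ind u) k.
Proof.
move=> k_u; have : nth 0 (ind u) k \in ind u by rewrite mem_nth // size_ind.
by rewrite /ind mem_sort => /mapP [t]; rewrite mem_enum => tu ->; exists t.
Qed.

Lemma leq_last_ind u (t : 'I_m) : t \in u -> val t <= nth 0 (ind u) #|u|.-1.
Proof.
rewrite -mem_ind => tu; rewrite -(nth_index 0 tu).
have t_idx : index (val t) (ind u) < #|u| by rewrite -size_ind index_mem.
by apply: (sorted_leq_nth leq_trans leqnn 0 (sort_sorted leq_total _));
  rewrite ?inE -/(ind u) ?size_ind; lia.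
Qed.

End Indices.

Section OrbitSums.
Variables (m : nat) (f g : monom m) (y z : 'I_m).
Hypotheses (yf : y \in f) (y_max : forall t, t \in f -> t != y -> t < y).
Hypotheses (zf : z \in f) (zNy : z != y) (g_below : forall t, t \in g -> t < z).

Let rest B e x := [forall i in f, (i != y) ==> peval (aff_form B e i) x].

Let peval_act_top B e x :
  peval (lta_act B e f) x = peval (aff_form B e y) x && rest B e x.
Proof.
rewrite peval_act; apply/forall_inP/andP => [all_f | [top others] i ifP].
  by split; [exact: all_f | apply/forall_inP => i /all_f ->; rewrite implybT].
by case: (eqVneq i y) => [-> // | iNy]; move/forall_inP: others => /(_ i ifP); rewrite iNy.
Qed.

Let rest_toggle_top B e x : rest B e (toggle x y) = rest B e x.
Proof.
apply: eq_forallb_in => i ifP; case: (eqVneq i y) => //= iNy.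
by rewrite (peval_toggle x (@vars_below_aff _ B e i)) // y_max.
Qed.

Let rest_toggle_exclusive B e x : rest B e x -> rest B e (toggle x z) -> False.
Proof.
move=> /forall_inP /(_ z zf) + /forall_inP /(_ z zf); rewrite zNy /= peval_aff_toggle.
by move=> ->.
Qed.

Lemma lta_act_eq_of_vars_below B e B' e' :
  vars_below z (padd (lta_act B e f) (lta_act B' e' f)) -> lta_act B e f = lta_act B' e' f.
Proof.
move=> low; pose D x := peval (lta_act B e f) x (+) peval (lta_act B' e' f) x.
have D_toggle (t : 'I_m) x : z <= t -> D (toggle x t) = D x.
  by move=> zt; rewrite /D -!peval_padd (peval_toggle x low).
have same_rest x : rest B e x = rest B' e' x.
  have := D_toggle y x (ltnW (y_max zf zNy)).
  rewrite /D !peval_act_top !rest_toggle_top !peval_aff_toggle.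
  by case: (peval _ x); case: (peval _ x); case: (rest B e x); case: (rest B' e' x).
have D_rest x : D x -> rest B e x.
  by rewrite /D !peval_act_top -same_rest; case: (rest B e x); rewrite ?andbF.
apply: peval_inj => x; suff : ~~ D x by rewrite /D; case: (peval _ x); case: (peval _ x).
apply/negP => Dx.
by apply: (rest_toggle_exclusive (D_rest _ Dx)); apply: D_rest; rewrite D_toggle.
Qed.

Lemma padd_lta_act_inj B e C c B' e' C' c' :
  padd (lta_act B e f) (lta_act C c g) = padd (lta_act B' e' f) (lta_act C' c' g) ->
  lta_act B e f = lta_act B' e' f /\ lta_act C c g = lta_act C' c' g.
Proof.
move=> sum_eq.
have diff_eq :
    padd (lta_act B e f) (lta_act B' e' f) = padd (lta_act C c g) (lta_act C' c' g).
  apply: peval_inj => x; have := congr1 (fun P => peval P x) sum_eq; rewrite !peval_padd.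
  by case: (peval _ x); case: (peval _ x); case: (peval _ x); case: (peval _ x).
have fact : lta_act B e f = lta_act B' e' f.
  apply: lta_act_eq_of_vars_below; rewrite diff_eq.
  by apply: vars_below_padd; apply: vars_below_act.
split=> //; apply: peval_inj => x; have := congr1 (fun P => peval P x) sum_eq.
by rewrite !peval_padd fact; case: (peval _ x); case: (peval _ x); case: (peval _ x).
Qed.

Lemma card_sumset_lta_orbit :
  #|sumset (lta_orbit f) (lta_orbit g)| = #|lta_orbit f| * #|lta_orbit g|.
Proof.
rewrite /sumset curry_imset2X -cardsX; apply: card_in_imset => -[a b] [a' b'].
rewrite !inE /= => /andP[/imsetP[[B e] _ ->] /imsetP[[C c] _ ->]].
move=> /andP[/imsetP[[B' e'] _ ->] /imsetP[[C' c'] _ ->]] /= /padd_lta_act_inj[-> ->] //.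
Qed.

End OrbitSums.

Lemma sumsetC m (A B : {set rpoly m}) : sumset A B = sumset B A.
Proof.
apply/setP => P; apply/imset2P/imset2P => -[a b aA bB ->]; exists b a => //;
  by rewrite /padd setUC.
Qed.

(* [ind f] is 0-indexed, so i_s and i_{s-1} are its entries [s.-1] and [s.-2]. *)
Lemma card_sumset_lta_orbit_ind m (f g : monom m) s :
  #|f| = s -> #|g| = s -> 2 <= s ->
  nth 0 (ind f) s.-2 < nth 0 (ind f) s.-1 -> nth 0 (ind g) s.-1 < nth 0 (ind f) s.-2 ->
  #|sumset (lta_orbit f) (lta_orbit g)| = #|lta_orbit f| * #|lta_orbit g|.
Proof.
move=> fs gs s2 zy gz.
have [y yf y_val] : exists2 y : 'I_m, y \in f & val y = nth 0 (ind f) s.-1.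
  by apply: nth_ind_mem; lia.
have [z zf z_val] : exists2 z : 'I_m, z \in f & val z = nth 0 (ind f) s.-2.
  by apply: nth_ind_mem; lia.
apply: (@card_sumset_lta_orbit _ f g y z yf).
- by move=> t tf tNy; rewrite ltn_neqAle [_ != _]tNy y_val -fs leq_last_ind.
- exact: zf.
- by rewrite -(inj_eq val_inj) y_val z_val neq_ltn zy.
- by move=> t tg; rewrite z_val (leq_ltn_trans _ gz) // -gs leq_last_ind.
Qed.

Theorem mainTheorem11 (m : nat) (I : {set monom m}) (f g : monom m) (s : nat) :
  decreasing I -> f \in I -> g \in I ->
  #|f| = s -> #|g| = s -> 2 <= s ->
  (let i_ k := nth 0 (ind f) k.-1 in
   let j_ k := nth 0 (ind g) k.-1 in
   [&& i_ s.-1 < i_ s & j_ s < i_ s.-1] || [&& j_ s.-1 < j_ s & i_ s < j_ s.-1]) ->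
  #|sumset (lta_orbit f) (lta_orbit g)| = #|lta_orbit f| * #|lta_orbit g|.
Proof.
move=> _ _ _ fs gs s2 /= /orP[/andP[fy gz] | /andP[gy fz]].
  exact: (card_sumset_lta_orbit_ind fs gs s2 fy gz).
rewrite (sumsetC (lta_orbit f)) mulnC; exact: (card_sumset_lta_orbit_ind gs fs s2 gy fz).
Qed.
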